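(* Let $\mathcal{L}$ be a closed chain of $n \ge 7$ revolute joints with screw axes $\bm{\xi}_1,\dots,\bm{\xi}_n$ (in the cyclic order of the chain). Suppose there is a line $\ell$ such that every axis $\bm{\xi}_i$ intersects $\ell$, at points $p_1,\dots,p_n$ respectively, and these points occur along $\ell$ in monotone order, i.e. $p_1, p_2, \dots, p_n$ appear consecutively in this order along $\ell$ (in one of its two directions). Then $\mathcal{L}$ is hypo-paradoxical.
   Context: For a revolute joint with unit axis direction $\bm{\omega}_i$ through point $\bm{q}_i$, the screw is $\bm{\xi}_i = (\bm{\omega}_i, \bm{q}_i\times\bm{\omega}_i)$ with twist matrix $\hat{\bm{\xi}}_i = \begin{bmatrix} [\bm{\omega}_i]_\times & \bm{q}_i \times \bm{\omega}_i \\ 0 & 0\end{bmatrix}$. The configuration space of the closed chain is $\mathcal{C}(\mathcal{L}) = \{(\theta_1,\dots,\theta_n) : \prod_{i=1}^n e^{\hat{\bm{\xi}}_i\theta_i} = I_4\}$ near $\theta=0$ (it depends only on the screw axes). The Chebyshev–Grübler–Kutzbach mobility of a closed chain with $n$ links and $n$ revolute joints is $M = n-6$. A closed chain is hypo-paradoxical if $M > 0$ but $\dim\mathcal{C}(\mathcal{L}) = 0$, i.e. it admits no nontrivial continuous motion. *)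

From HB Require Import structures.
From mathcomp Require Import all_boot all_order all_algebra.
From mathcomp Require Import all_classical all_reals all_analysis.
Set Implicit Arguments. Unset Strict Implicit. Unset Printing Implicit Defensive.
Import Order.TTheory GRing.Theory Num.Theory.
Import numFieldNormedType.Exports.
Local Open Scope ring_scope.

Section Screws.
Variable R : realType.

Definition vcoord (w : 'rV[R]_3) (k : nat) : R := w ord0 (inord k).

(* The skew-symmetric matrix [w]_x, so that [w]_x *m v^T = (w x v)^T. *)
Definition skew (w : 'rV[R]_3) : 'M[R]_3 :=
  \matrix_(i < 3, j < 3)
    match val i, val j with
    | 0, 1 => - vcoord w 2 | 0, 2 => vcoord w 1
    | 1, 0 => vcoord w 2   | 1, 2 => - vcoord w 0
    | 2, 0 => - vcoord w 1 | 2, 1 => vcoord w 0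
    | _, _ => 0
    end.

Definition cross (u v : 'rV[R]_3) : 'rV[R]_3 := (skew u *m v^T)^T.

Definition dot (u v : 'rV[R]_3) : R := \sum_(k < 3) u ord0 k * v ord0 k.

(* Twist matrix of the screw xi = (w, q x w) of a revolute joint with unit
   axis direction w through the point q:
     [ [w]_x   q x w ]
     [   0       0   ]   (4 x 4). *)
Definition twist (w q : 'rV[R]_3) : 'M[R]_4 :=
  let v := cross q w in
  \matrix_(i < 4, j < 4)
    if (i < 3)%N && (j < 3)%N then skew w (inord i) (inord j)
    else if (i < 3)%N && (j == 3 :> nat) then v ord0 (inord i)
    else 0.

Definition expm (A : 'M[R]_4) : 'M[R]_4 :=
  limn (fun N : nat => \sum_(k < N) (k`!%:R)^-1 *: A ^+ k).

Definition loop_closes (n : nat) (w q : 'I_n -> 'rV[R]_3) (theta : 'I_n -> R) : Prop :=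
  \prod_(i < n) expm (theta i *: twist (w i) (q i)) = 1.

Definition config_space (n : nat) (w q : 'I_n -> 'rV[R]_3) : set ('I_n -> R) :=
  [set theta | loop_closes w q theta].

(* dim C(L) = 0 near theta = 0: theta = 0 is an isolated point of C(L). *)
Definition config_dim0_at_0 (n : nat) (w q : 'I_n -> 'rV[R]_3) : Prop :=
  exists2 e : R, 0 < e &
    forall theta : 'I_n -> R, config_space w q theta ->
      (forall i, `|theta i| < e) -> forall i, theta i = 0.

Definition cgk_mobility (n : nat) : int := n%:Z - 6.

Definition hypo_paradoxical (n : nat) (w q : 'I_n -> 'rV[R]_3) : Prop :=
  0 < cgk_mobility n /\ config_dim0_at_0 w q.

End Screws.

From HB Require Import structures.
From mathcomp Require Import all_boot all_order all_algebra.
From mathcomp Require Import all_classical all_reals all_analysis.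
From mathcomp Require Import ring lra zify.
Import Order.TTheory GRing.Theory Num.Theory.
Import numFieldNormedType.Exports.
Set Implicit Arguments. Unset Strict Implicit. Unset Printing Implicit Defensive.
Local Open Scope ring_scope.

(* Let G_k be the product of the first k joint motions and p_j = a + t_j d the
   point where axis j meets the line.  Joint j fixes p_j, so G_(j+1) p_j = G_j p_j,
   and S_j := <G_j p_j - p_j, d> satisfies
     S_(j+1) - S_j = (t_(j+1) - t_j) (<G_(j+1) d, d> - |d|^2) <= 0,
   since G_(j+1) is an isometry and t is increasing.  The loop closes, so
   S_0 = 0 = S_n and every step is an equality case of Cauchy-Schwarz: each G_k
   fixes d and then the whole line, hence so does every joint motion.  A
   rotation by theta fixing a point off its axis has sin theta = 0, so near 0
   all joint angles vanish. *)

Section Rodrigues.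
Variable R : realType.

(* [sin_sign k] and [cos_sign k] are the k-th derivatives of sin and cos at 0. *)
Definition sin_sign (k : nat) : R := (odd k)%:R * (-1) ^+ k.-1./2.
Definition cos_sign (k : nat) : R := (~~ odd k)%:R * (-1) ^+ k./2.

Lemma exprS_cubeN (A : algType R) (X : A) : X ^+ 3 = - X ->
  forall k, X ^+ k.+1 = sin_sign k.+1 *: X - cos_sign k.+1 *: X ^+ 2.
Proof.
move=> X3; elim=> [|k IH].
  by rewrite /sin_sign /cos_sign /= expr0 mul1r mul0r scale1r scale0r subr0 expr1.
rewrite exprSr IH mulrBl -!scalerAl -expr2 -exprSr X3 scalerN opprK.
rewrite addrC /sin_sign /cos_sign /= !negbK; congr (_ + _).
by case: (odd k) => /=;
  rewrite ?mul0r ?scale0r ?oppr0 // !mul1r (exprS _ k./2) mulN1r scaleNr opprK.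
Qed.

Lemma exp_term_cubeN (A : algType R) (X : A) (th : R) : X ^+ 3 = - X -> forall k,
  (k`!%:R)^-1 *: (th *: X) ^+ k =
  sin_coeff th k *: X - cos_coeff th k *: X ^+ 2 + (k == 0)%:R *: (1 + X ^+ 2).
Proof.
move=> X3 [|k].
  have -> : sin_coeff th 0 = 0 by rewrite /sin_coeff /= !mul0r.
  have -> : cos_coeff th 0 = 1.
    by rewrite /cos_coeff /= mul1r (expr0 th) expr0z !mul1r invr1.
  by rewrite !expr0 /= invr1 !scale1r scale0r sub0r addrCA addNr addr0.
rewrite exprZn (exprS_cubeN X3 k) /sin_coeff /cos_coeff /= scale0r addr0.
rewrite !scalerBr !scalerA /sin_sign /cos_sign /=; congr (_ *: _ - _ *: _).
  by ring.
by change ((-1) ^ uphalf k) with ((-1 : R) ^+ uphalf k); ring.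
Qed.

Lemma expm_cubeN (X : 'M[R]_4) (th : R) : X ^+ 3 = - X ->
  expm (th *: X) = 1 + sin th *: X + (1 - cos th) *: X ^+ 2.
Proof.
move=> X3; rewrite /expm.
have partial_sum N : \sum_(k < N.+1) (k`!%:R)^-1 *: (th *: X) ^+ k =
    series (sin_coeff th) N.+1 *: X - series (cos_coeff th) N.+1 *: X ^+ 2
    + (1 + X ^+ 2).
  under eq_bigr do rewrite exp_term_cubeN //.
  rewrite !big_split /= -!scaler_suml /series /= !big_mkord.
  have -> : \sum_(i < N.+1) ((i : nat) == 0)%:R = 1 :> R.
    by rewrite big_ord_recl big1 ?addr0 // => i _.
  by rewrite sumrN -scaler_suml scale1r.
apply: cvg_lim => //; rewrite -cvg_shiftS /=.
under eq_fun do rewrite partial_sum.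
have -> : 1 + sin th *: X + (1 - cos th) *: X ^+ 2 =
    sin th *: X - cos th *: X ^+ 2 + (1 + X ^+ 2).
  by rewrite scalerBl scale1r [RHS]addrC -!addrA; congr (1 + _); rewrite addrCA.
apply: cvgD; last exact: cvg_cst.
apply: cvgB; apply: cvgZ; try exact: cvg_cst.
  by rewrite cvg_shiftS sin.unlock; exact: is_cvg_series_sin_coeff.
by rewrite cvg_shiftS cos.unlock; exact: is_cvg_series_cos_coeff.
Qed.

End Rodrigues.

Section Coordinates.
Variable R : realType.

Lemma sum3E (F : 'I_3 -> R) :
  \sum_(i < 3) F i = F (inord 0) + F (inord 1) + F (inord 2).
Proof.
rewrite !big_ord_recl big_ord0 addr0 !addrA /=.
by congr (F _ + F _ + F _); apply/val_inj; rewrite /= inordK.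
Qed.

Lemma sum4E (F : 'I_4 -> R) :
  \sum_(i < 4) F i = F (inord 0) + F (inord 1) + F (inord 2) + F (inord 3).
Proof.
rewrite !big_ord_recl big_ord0 addr0 !addrA /=.
by congr (F _ + F _ + F _ + F _); apply/val_inj; rewrite /= inordK.
Qed.

Lemma val_inord n m : (m < n.+1)%N -> \val (inord m : 'I_n.+1) = m.
Proof. exact: inordK. Qed.

Definition ccoord (v : 'cV[R]_4) (k : nat) : R := v (inord k) 0.

Lemma row3P (u v : 'rV[R]_3) :
  (forall k, (k < 3)%N -> vcoord u k = vcoord v k) -> u = v.
Proof.
by move=> H; apply/matrixP => i j; rewrite (ord1 i) -(inord_val j); apply: H.
Qed.

Lemma col4P (u v : 'cV[R]_4) :
  (forall k, (k < 4)%N -> ccoord u k = ccoord v k) -> u = v.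
Proof.
by move=> H; apply/matrixP => i j; rewrite (ord1 j) -(inord_val i); apply: H.
Qed.

Lemma matrix4P (A B : 'M[R]_4) :
  (forall i j, (i < 4)%N -> (j < 4)%N -> A (inord i) (inord j) = B (inord i) (inord j)) ->
  A = B.
Proof.
by move=> H; apply/matrixP => i j; rewrite -(inord_val i) -(inord_val j); apply: H.
Qed.

Lemma vcoordD (u v : 'rV[R]_3) k : vcoord (u + v) k = vcoord u k + vcoord v k.
Proof. by rewrite /vcoord mxE. Qed.

Lemma vcoordZ (c : R) (u : 'rV[R]_3) k : vcoord (c *: u) k = c * vcoord u k.
Proof. by rewrite /vcoord mxE. Qed.

Lemma vcoordB (u v : 'rV[R]_3) k : vcoord (u - v) k = vcoord u k - vcoord v k.
Proof. by rewrite /vcoord !mxE. Qed.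

Lemma vcoord0 k : vcoord (0 : 'rV[R]_3) k = 0.
Proof. by rewrite /vcoord mxE. Qed.

Lemma ccoordD (u v : 'cV[R]_4) k : ccoord (u + v) k = ccoord u k + ccoord v k.
Proof. by rewrite /ccoord mxE. Qed.

Lemma ccoordB (u v : 'cV[R]_4) k : ccoord (u - v) k = ccoord u k - ccoord v k.
Proof. by rewrite /ccoord !mxE. Qed.

Lemma ccoordN (u : 'cV[R]_4) k : ccoord (- u) k = - ccoord u k.
Proof. by rewrite /ccoord mxE. Qed.

Lemma ccoordZ (c : R) (u : 'cV[R]_4) k : ccoord (c *: u) k = c * ccoord u k.
Proof. by rewrite /ccoord mxE. Qed.

Lemma ccoord0 k : ccoord 0 k = 0.
Proof. by rewrite /ccoord mxE. Qed.

Lemma mulmx4E (A B : 'M[R]_4) i j : (A *m B) i j =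
  A i (inord 0) * B (inord 0) j + A i (inord 1) * B (inord 1) j +
  A i (inord 2) * B (inord 2) j + A i (inord 3) * B (inord 3) j.
Proof. by rewrite mxE sum4E. Qed.

Lemma ccoord_mulmx (A : 'M[R]_4) (v : 'cV[R]_4) k : ccoord (A *m v) k =
  A (inord k) (inord 0) * ccoord v 0 + A (inord k) (inord 1) * ccoord v 1 +
  A (inord k) (inord 2) * ccoord v 2 + A (inord k) (inord 3) * ccoord v 3.
Proof. by rewrite /ccoord mxE sum4E. Qed.

Lemma dotE (u v : 'rV[R]_3) : dot u v =
  vcoord u 0 * vcoord v 0 + vcoord u 1 * vcoord v 1 + vcoord u 2 * vcoord v 2.
Proof. by rewrite /dot sum3E. Qed.

Lemma crossE (u v : 'rV[R]_3) k : (k < 3)%N -> vcoord (cross u v) k =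
  match k with
  | 0 => vcoord u 1 * vcoord v 2 - vcoord u 2 * vcoord v 1
  | 1 => vcoord u 2 * vcoord v 0 - vcoord u 0 * vcoord v 2
  | _ => vcoord u 0 * vcoord v 1 - vcoord u 1 * vcoord v 0
  end.
Proof.
move=> Hk; rewrite /vcoord /cross !mxE sum3E !mxE !val_inord //.
by case: k Hk => [|[|[|k]]] // _ /=; rewrite /vcoord; ring.
Qed.

Lemma cross_axisDr (w x : 'rV[R]_3) (s : R) : cross w (s *: w + x) = cross w x.
Proof.
apply: row3P => k hk; rewrite !crossE //.
by case: k hk => [|[|[|k]]] // _; rewrite !vcoordD !vcoordZ; ring.
Qed.

Definition twist_entry (w q : 'rV[R]_3) (i j : nat) : R :=
  match i, j with
  | 0, 1 => - vcoord w 2 | 0, 2 => vcoord w 1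
  | 1, 0 => vcoord w 2   | 1, 2 => - vcoord w 0
  | 2, 0 => - vcoord w 1 | 2, 1 => vcoord w 0
  | 0, 3 => vcoord q 1 * vcoord w 2 - vcoord q 2 * vcoord w 1
  | 1, 3 => vcoord q 2 * vcoord w 0 - vcoord q 0 * vcoord w 2
  | 2, 3 => vcoord q 0 * vcoord w 1 - vcoord q 1 * vcoord w 0
  | _, _ => 0
  end.

Lemma twistE (w q : 'rV[R]_3) i j : (i < 4)%N -> (j < 4)%N ->
  twist w q (inord i) (inord j) = twist_entry w q i j.
Proof.
move=> Hi Hj; rewrite /twist mxE !inordK //.
case: i Hi => [|[|[|[|i]]]] // _; case: j Hj => [|[|[|[|j]]]] // _ /=;
  rewrite ?mxE ?val_inord //= sum3E !mxE !val_inord //= /vcoord; ring.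
Qed.

Lemma twist_cube (w q : 'rV[R]_3) : twist w q ^+ 3 = - (dot w w) *: twist w q.
Proof.
apply: matrix4P => i j Hi Hj.
rewrite [RHS]mxE exprS expr2 -!mulmxE !mulmx4E !twistE // dotE.
by case: i Hi => [|[|[|[|i]]]] // _; case: j Hj => [|[|[|[|j]]]] // _ /=; ring.
Qed.

(* Homogeneous coordinates: the point x is [hom x 1], the direction v is [hom v 0]. *)
Definition hom (x : 'rV[R]_3) (c : R) : 'cV[R]_4 :=
  \col_(i < 4) if (i < 3)%N then vcoord x i else c.

Lemma ccoord_hom x c k : (k < 4)%N ->
  ccoord (hom x c) k = if (k < 3)%N then vcoord x k else c.
Proof. by move=> hk; rewrite /ccoord mxE inordK. Qed.

Lemma hom_line (a d : 'rV[R]_3) (c : R) : hom a 1 + c *: hom d 0 = hom (a + c *: d) 1.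
Proof.
apply: col4P => k hk; rewrite ccoordD ccoordZ !ccoord_hom //.
by case: ifP => _; rewrite ?vcoordD ?vcoordZ // mulr0 addr0.
Qed.

Lemma hom_eq0 (x : 'rV[R]_3) (c : R) : hom x c = 0 -> x = 0.
Proof.
move=> h0; apply: row3P => k hk; rewrite vcoord0.
by have := ccoord_hom x c (ltnW hk); rewrite hk h0 ccoord0.
Qed.

Lemma twist_hom (w q x : 'rV[R]_3) (c : R) :
  twist w q *m hom x c = hom (cross w (x - c *: q)) 0.
Proof.
apply: col4P => k hk; rewrite ccoord_mulmx !twistE // !ccoord_hom //=.
case: k hk => [|[|[|[|k]]]] // _ /=; rewrite ?crossE //=;
  rewrite ?vcoordB ?vcoordZ; ring.
Qed.

Lemma twist_hom_axis (w q x : 'rV[R]_3) (s : R) :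
  twist w q *m hom (q + s *: w + x) 1 = hom (cross w x) 0.
Proof.
by rewrite twist_hom scale1r addrAC [q + _]addrC addrK cross_axisDr.
Qed.

End Coordinates.

Section RigidMotions.
Variable R : realType.

Definition sdot (u v : 'cV[R]_4) : R :=
  ccoord u 0 * ccoord v 0 + ccoord u 1 * ccoord v 1 + ccoord u 2 * ccoord v 2.

Definition snorm (v : 'cV[R]_4) : R := sdot v v.

Lemma snorm_ge0 v : 0 <= snorm v.
Proof. by rewrite /snorm /sdot -!expr2 !addr_ge0 // sqr_ge0. Qed.

Lemma snormB u v : snorm (u - v) = snorm u - 2 * sdot u v + snorm v.
Proof. by rewrite /snorm /sdot !ccoordB; ring. Qed.

Lemma snorm_eq0 v : snorm v = 0 -> ccoord v 3 = 0 -> v = 0.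
Proof.
move=> /eqP; rewrite /snorm /sdot -!expr2 !paddr_eq0 ?addr_ge0 ?sqr_ge0 //.
rewrite !sqrf_eq0 => /andP[/andP[/eqP v0 /eqP v1] /eqP v2] v3.
by apply: col4P => k hk; rewrite ccoord0; case: k hk => [|[|[|[|k]]]].
Qed.

(* Rigid motions, in homogeneous coordinates, are only used through these two
   properties. *)
Definition rigid (M : 'M[R]_4) : Prop :=
  (forall v, ccoord (M *m v) 3 = ccoord v 3) /\
  (forall v, ccoord v 3 = 0 -> snorm (M *m v) = snorm v).

Lemma rigid1 : rigid 1.
Proof. by split=> v; rewrite mul1mx. Qed.

Lemma rigidM A B : rigid A -> rigid B -> rigid (A * B).
Proof.
move=> [A3 An] [B3 Bn]; split=> v; rewrite -mulmxE -mulmxA; first by rewrite A3 B3.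
by move=> v3; rewrite An ?Bn // B3.
Qed.

Lemma rigid_prod (F : nat -> 'M[R]_4) k :
  (forall j, rigid (F j)) -> rigid (\prod_(j < k) F j).
Proof. by move=> rF; apply: big_ind => //; [exact: rigid1 | exact: rigidM]. Qed.

Lemma rigid_sdot_le M v : rigid M -> ccoord v 3 = 0 -> sdot (M *m v) v <= snorm v.
Proof.
move=> [_ Mn] v3; have := snorm_ge0 (M *m v - v).
by rewrite snormB Mn //; lra.
Qed.

Lemma rigid_sdot_eq M v : rigid M -> ccoord v 3 = 0 ->
  sdot (M *m v) v = snorm v -> M *m v = v.
Proof.
move=> [M3 Mn] v3 eq_v; apply/eqP; rewrite -subr_eq0; apply/eqP.
apply: snorm_eq0; last by rewrite ccoordB M3 subrr.
by rewrite snormB Mn // eq_v; ring.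
Qed.

Lemma rigid_mulmxI M u v : rigid M -> ccoord u 3 = ccoord v 3 ->
  M *m u = M *m v -> u = v.
Proof.
move=> [_ Mn] uv3 Muv; apply/eqP; rewrite -subr_eq0; apply/eqP.
have uv3' : ccoord (u - v) 3 = 0 by rewrite ccoordB uv3 subrr.
apply: snorm_eq0 => //; rewrite -(Mn _ uv3') mulmxBr Muv subrr.
by rewrite /snorm /sdot !ccoord0; ring.
Qed.

End RigidMotions.

Section Revolute.
Variable R : realType.
Variables (w q : 'rV[R]_3) (th : R).
Hypothesis w_unit : dot w w = 1.

Lemma expm_twist :
  expm (th *: twist w q) = 1 + sin th *: twist w q + (1 - cos th) *: twist w q ^+ 2.
Proof. by apply: expm_cubeN; rewrite twist_cube w_unit scaleN1r. Qed.

Lemma expm_twist_mulmx (v : 'cV[R]_4) : expm (th *: twist w q) *m v =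
  v + sin th *: (twist w q *m v) + (1 - cos th) *: (twist w q *m (twist w q *m v)).
Proof.
by rewrite expm_twist !mulmxDl mul1mx -!scalemxAl expr2 -mulmxE mulmxA.
Qed.

Lemma ccoord_twist3 (v : 'cV[R]_4) : ccoord (twist w q *m v) 3 = 0.
Proof. by rewrite ccoord_mulmx !twistE //=; ring. Qed.

Lemma sdot_twist (u : 'cV[R]_4) : ccoord u 3 = 0 -> sdot u (twist w q *m u) = 0.
Proof. by move=> u3; rewrite /sdot !ccoord_mulmx !twistE //= u3; ring. Qed.

Lemma rigid_expm_twist : rigid (expm (th *: twist w q)).
Proof.
split=> v.
  by rewrite expm_twist_mulmx !ccoordD !ccoordZ !ccoord_twist3; ring.
move=> v3; rewrite expm_twist_mulmx /snorm /sdot !ccoordD !ccoordZ !ccoord_mulmx !twistE //= v3.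
set w0 := vcoord w 0; set w1 := vcoord w 1; set w2' := vcoord w 2.
have w2 := w_unit; rewrite dotE -/w0 -/w1 -/w2' in w2.
set u0 := ccoord v 0; set u1 := ccoord v 1; set u2 := ccoord v 2.
set s := sin th; set c := cos th.
(* the cross terms cancel and the |w x v|^2 terms carry the factor
   s^2 + (1 - c)^2 |w|^2 - 2 (1 - c) = c^2 + s^2 - 1 = 0 *)
apply/eqP; rewrite -subr_eq0; apply/eqP.
transitivity (((w1 * u2 - w2' * u1) ^+ 2 + (w2' * u0 - w0 * u2) ^+ 2
    + (w0 * u1 - w1 * u0) ^+ 2)
  * (s ^+ 2 + (1 - c) ^+ 2 * (w0 * w0 + w1 * w1 + w2' * w2') - 2 * (1 - c))).
  by ring.
have -> : s ^+ 2 + (1 - c) ^+ 2 * (w0 * w0 + w1 * w1 + w2' * w2') - 2 * (1 - c)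
    = c ^+ 2 + s ^+ 2 - 1 by rewrite w2; ring.
by rewrite cos2Dsin2 subrr mulr0.
Qed.

Lemma expm_twist_fixes_axis s :
  expm (th *: twist w q) *m hom (q + s *: w) 1 = hom (q + s *: w) 1.
Proof.
have T0 : twist w q *m hom (q + s *: w) 1 = 0.
  rewrite -[q + s *: w]addr0 twist_hom_axis /cross trmx0 mulmx0 trmx0.
  by apply: col4P => k hk; rewrite ccoord_hom // ccoord0 vcoord0; case: ifP.
by rewrite expm_twist_mulmx T0 mulmx0 !scaler0 !addr0.
Qed.

Lemma sin_eq0_of_expm_twist_fixed (v : 'cV[R]_4) :
  expm (th *: twist w q) *m v = v -> twist w q *m v != 0 -> sin th = 0.
Proof.
set u := twist w q *m v => fixed u_neq0.
have u3 : ccoord u 3 = 0 by exact: ccoord_twist3.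
have : sin th *: u + (1 - cos th) *: (twist w q *m u) = 0.
  by apply: (addrI v); rewrite addr0 addrA -expm_twist_mulmx.
move=> /(congr1 (sdot u)).
have -> : sdot u (sin th *: u + (1 - cos th) *: (twist w q *m u)) =
    sin th * snorm u + (1 - cos th) * sdot u (twist w q *m u).
  by rewrite /snorm /sdot !ccoordD !ccoordZ; ring.
have -> : sdot u 0 = 0 by rewrite /sdot !ccoord0; ring.
rewrite sdot_twist // mulr0 addr0 => /eqP; rewrite mulf_eq0 => /orP[/eqP // | /eqP u0].
by move: u_neq0; rewrite (snorm_eq0 u0 u3) eqxx.
Qed.

End Revolute.

Section RigidChain.
Variable R : realType.

Lemma nonincreasing_eq0 (S : nat -> R) m : (forall j, (j < m)%N -> S j.+1 <= S j) ->
  S 0%N = 0 -> S m = 0 -> forall j, (j <= m)%N -> S j = 0.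
Proof.
move=> S_decr S0 Sm.
have S_le i j : (i <= j <= m)%N -> S j <= S i.
  move=> /andP[+ jm]; elim: j jm => [|j IH] jm; first by rewrite leqn0 => /eqP->.
  rewrite leq_eqVlt => /orP[/eqP-> // | ij].
  exact: le_trans (S_decr j jm) (IH (ltnW jm) ij).
move=> j jm; apply/eqP; rewrite eq_le; apply/andP; split.
  by rewrite -S0; apply: S_le; rewrite jm.
by rewrite -Sm; apply: S_le; rewrite jm leqnn.
Qed.

Variables (F : nat -> 'M[R]_4) (m : nat) (A D : 'cV[R]_4) (t : nat -> R).
Hypothesis F_rigid : forall j, rigid (F j).
Hypothesis loop_closed : \prod_(j < m.+1) F j = 1.
Hypothesis F_fixes : forall j, (j <= m)%N -> F j *m (A + t j *: D) = A + t j *: D.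
Hypothesis t_increasing : forall j, (j < m)%N -> t j < t j.+1.
Hypothesis D3 : ccoord D 3 = 0.

Let G k := \prod_(j < k) F j.
Let p j := A + t j *: D.
Let err j := G j *m p j - p j.
Let S j := sdot (err j) D.

Let G_rigid k : rigid (G k).
Proof. exact: rigid_prod. Qed.

Let GS k : G k.+1 = G k * F k.
Proof. by rewrite /G big_ord_recr. Qed.

Let G0 : G 0%N = 1.
Proof. by rewrite /G big_ord0. Qed.

Lemma chain_err_step j : (j < m)%N ->
  err j.+1 = err j + (t j.+1 - t j) *: (G j.+1 *m D - D).
Proof.
move=> jm; have GSp : G j.+1 *m p j = G j *m p j.
  by rewrite GS -mulmxE -mulmxA F_fixes // ltnW.
rewrite /err -GSp /p !mulmxDr -!scalemxAr.
by apply: col4P => k _; rewrite !(ccoordD, ccoordN, ccoordZ); ring.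
Qed.

Lemma chain_defect_step j : (j < m)%N ->
  S j.+1 = S j + (t j.+1 - t j) * (sdot (G j.+1 *m D) D - snorm D).
Proof.
move=> jm; rewrite /S chain_err_step // /snorm /sdot.
by rewrite !(ccoordD, ccoordN, ccoordZ); ring.
Qed.

Lemma chain_defect_decr j : (j < m)%N -> S j.+1 <= S j.
Proof.
move=> jm; rewrite chain_defect_step // gerDl mulr_ge0_le0 //.
  by rewrite subr_ge0 ltW // t_increasing.
by rewrite subr_le0 rigid_sdot_le.
Qed.

Lemma chain_fixes_direction k : (k <= m)%N -> G k *m D = D.
Proof.
case: k => [_|j jm]; first by rewrite G0 mul1mx.
have S0 : S 0%N = 0 by rewrite /S /err G0 mul1mx subrr /sdot !ccoord0; ring.
have Sm : S m = 0.
  rewrite /S /err /p -{1}(F_fixes (leqnn m)) mulmxA mulmxE -GS /G loop_closed.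
  rewrite mul1mx.
  by rewrite subrr /sdot !ccoord0; ring.
have S_eq0 := nonincreasing_eq0 chain_defect_decr S0 Sm.
apply: rigid_sdot_eq => //; apply/eqP; rewrite -subr_eq0; apply/eqP.
have := chain_defect_step jm; rewrite (S_eq0 j.+1 jm) (S_eq0 j (ltnW jm)) add0r.
move=> /esym/eqP.
by rewrite mulf_eq0 subr_eq0 gt_eqF ?t_increasing // => /eqP.
Qed.

Lemma chain_err_eq0 j : (j <= m)%N -> err j = 0.
Proof.
elim: j => [_|j IH jm]; first by rewrite /err G0 mul1mx subrr.
by rewrite chain_err_step // (IH (ltnW jm)) (chain_fixes_direction jm) subrr scaler0 addr0.
Qed.

Lemma chain_fixes_line k c : (k <= m.+1)%N -> G k *m (A + c *: D) = A + c *: D.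
Proof.
rewrite leq_eqVlt => /orP[/eqP-> | km]; first by rewrite /G loop_closed mul1mx.
have GD := chain_fixes_direction km.
rewrite mulmxDr -scalemxAr GD; congr (_ + _).
have /eqP := chain_err_eq0 km; rewrite /err /p subr_eq0 mulmxDr -scalemxAr GD.
by move/eqP/addIr.
Qed.

Lemma rigid_chain_fixes_line j c : (j <= m)%N -> F j *m (A + c *: D) = A + c *: D.
Proof.
move=> jm; apply: (rigid_mulmxI (G_rigid j)); first exact: (F_rigid j).1.
by rewrite mulmxA mulmxE -GS !chain_fixes_line // ltnW // ltnW.
Qed.

End RigidChain.

Lemma sin_eq0_small (R : realType) (x : R) : sin x = 0 -> `|x| < pi -> x = 0.
Proof.
move=> sx0 x_small; case: (ltgtP x 0) => // [x_lt0 | x_gt0].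
  have := @sin_gt0_pi R (- x).
  by rewrite sinN sx0 oppr0 ltxx oppr_gt0 x_lt0 -(ltr0_norm x_lt0) x_small => /(_ isT).
have := @sin_gt0_pi R x.
by rewrite sx0 ltxx x_gt0 -(gtr0_norm x_gt0) x_small => /(_ isT).
Qed.

Unset Implicit Arguments.
Theorem mainTheorem2 (R : realType) (n : nat) (w q : 'I_n -> 'rV[R]_3)
    (a d : 'rV[R]_3) (t : 'I_n -> R) :
  (7 <= n)%N ->
  (forall i, dot (w i) (w i) = 1) ->
  d != 0 ->
  (forall i, cross (w i) d != 0) ->
  (forall i, exists s : R, a + t i *: d = q i + s *: w i) ->
  (forall i j : 'I_n, (i < j)%N -> t i < t j) ->
  hypo_paradoxical w q.
Proof.
case: n w q t => [//|m] w q t n_ge7 w_unit d_neq0 wd_neq0 meets t_mono.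
split; first by rewrite /cgk_mobility; lia.
exists pi => [|th closes small]; first exact: pi_gt0.
pose T j := twist (w (inord j)) (q (inord j)).
have line_fixed j c : (j <= m)%N ->
    expm (th (inord j) *: T j) *m hom (a + c *: d) 1 = hom (a + c *: d) 1.
  rewrite -!hom_line; apply: (rigid_chain_fixes_line
    (F := fun j => expm (th (inord j) *: T j)) (t := fun j => t (inord j))).
  - by move=> k; exact: rigid_expm_twist.
  - by rewrite -[RHS]closes; apply: eq_bigr => i _; rewrite /T inord_val.
  - move=> k _; rewrite hom_line; have [s ->] := meets (inord k).
    exact: expm_twist_fixes_axis.
  - by move=> k km; apply: t_mono; rewrite !inordK //; lia.
  - by rewrite ccoord_hom.
have th0 j : (j <= m)%N -> th (inord j) = 0.
  move=> jm; apply: sin_eq0_small (small _).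
  apply: (sin_eq0_of_expm_twist_fixed (w_unit _) (line_fixed j (t (inord j) + 1) jm)).
  have [s hs] := meets (inord j).
  rewrite scalerDl scale1r addrA hs twist_hom_axis.
  by apply: contra_neq (wd_neq0 (inord j)) => /hom_eq0.
by move=> i; rewrite -(inord_val i); apply: th0; rewrite -ltnS.
Qed.
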